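(* For all $x\in R(E)$, $u\in R(F,H)$ and $v\in W(F,H)$, \[ x\bullet(uv)=(x\bullet u)v . \]
   Context: Let $f\in\mathbb{C}[H]$ be a polynomial. $R=R(f)$ is the associative $\mathbb{C}$-algebra generated by $E,F,H$ with relations $EF-FE=f(H)$, $HE-EH=E$, $HF-FH=-F$; the monomials $F^iH^jE^k$ form a basis of $R$. $Z(R)$ is the center of $R$. Let $R(E)=\mathbb{C}[E]$ and $R(F,H)$ the subalgebra generated by $F,H$. Fix an algebra homomorphism $\eta:R(E)\to\mathbb{C}$ with $\eta(E)\neq0$ and let $R_\eta(E)=\ker\eta$. Then $R=R(F,H)\oplus R\,R_\eta(E)$ as vector spaces; for $u\in R$, $u^\eta$ denotes its $R(F,H)$-component. $W(F,H)=\{z^\eta: z\in Z(R)\}$. The $\eta$-reduced action of $R(E)$ on $R(F,H)$ is $x\bullet v=(xv)^\eta-\eta(x)v$ for $x\in R(E)$, $v\in R(F,H)$. *)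

From HB Require Import structures.
From mathcomp Require Import all_boot all_order all_algebra.
From mathcomp Require Import reals complex.
From Stdlib Require Import ClassicalEpsilon.
Set Implicit Arguments. Unset Strict Implicit. Unset Printing Implicit Defensive.
Import Order.TTheory GRing.Theory Num.Theory.
Local Open Scope ring_scope.

Section Defs.
Variables (R : realType) (A : algType R[i]).
Local Notation C := R[i].

Definition peval (p : {poly C}) (x : A) : A :=
  \sum_(k < size p) p`_k *: x ^+ k.

Definition pbw_mono (E F H : A) (i j k : nat) : A := F ^+ i * H ^+ j * E ^+ k.

(* A is (a copy of) R(f): the relations hold and the monomials F^i H^j E^k
   form a C-basis (spanning + linearly independent). *)
Definition is_Rf (f : {poly C}) (E F H : A) : Prop :=
  [/\ E * F - F * E = peval f H,
      H * E - E * H = E,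
      H * F - F * H = - F,
      (forall a : A, exists (n : nat) (c : nat -> nat -> nat -> C),
          a = \sum_(i < n) \sum_(j < n) \sum_(k < n) c i j k *: pbw_mono E F H i j k) &
      (forall (n : nat) (c : nat -> nat -> nat -> C),
          \sum_(i < n) \sum_(j < n) \sum_(k < n) c i j k *: pbw_mono E F H i j k = 0 ->
          forall i j k, (i < n)%N -> (j < n)%N -> (k < n)%N -> c i j k = 0)].

Definition wordFH (F H : A) (s : seq bool) : A :=
  \prod_(b <- s) (if b then F else H).

(* R(F,H): the subalgebra generated by F and H (= linear span of words) *)
Definition inRFH (F H : A) (a : A) : Prop :=
  exists (n : nat) (c : 'I_n -> C) (w : 'I_n -> seq bool),
    a = \sum_(m < n) c m *: wordFH F H (w m).

(* R(E) = C[E]; eta is determined by lam = eta(E): eta(p(E)) = p(lam).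
   R R_eta(E): the left ideal generated by ker eta, i.e. finite sums r * y
   with r in R and y in ker eta. *)
Definition inRReta (lam : C) (E : A) (a : A) : Prop :=
  exists (n : nat) (r : 'I_n -> A) (q : 'I_n -> {poly C}),
    (forall m, (q m).[lam] = 0) /\ a = \sum_(m < n) r m * peval (q m) E.

(* u^eta : the R(F,H)-component of u in R = R(F,H) (+) R R_eta(E) *)
Definition eta_spec (lam : C) (E F H : A) (u w : A) : Prop :=
  inRFH F H w /\ inRReta lam E (u - w).

Definition eta_comp (lam : C) (E F H : A) (u : A) : A :=
  epsilon (inhabits (0 : A)) (eta_spec lam E F H u).

Definition central (z : A) : Prop := forall a : A, a * z = z * a.

Definition inW (lam : C) (E F H : A) (v : A) : Prop :=
  exists z, central z /\ v = eta_comp lam E F H z.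

(* eta-reduced action of x = p(E) in R(E) on v in R(F,H) *)
Definition bullet (lam : C) (E F H : A) (p : {poly C}) (v : A) : A :=
  eta_comp lam E F H (peval p E * v) - p.[lam] *: v.

End Defs.

(* Since [R = R(F,H) (+) R(E - lam)], the map [u |-> u^eta] is the projection
   along the left ideal [R(E - lam)]; directness of the sum comes from the PBW
   basis, because substituting [E := lam] on the right of the monomials kills
   [R(E - lam)] and fixes [R(F,H)].  The projection only depends on the class
   modulo the left ideal, and for central [z] it is multiplicative:
   [(a z)^eta = a^eta z^eta].  Hence [(p(E) u z^eta)^eta = (p(E) u)^eta z^eta],
   which is the identity after subtracting [p(lam) u z^eta]. *)
From HB Require Import structures.
From mathcomp Require Import all_boot all_order all_algebra.
From mathcomp Require Import reals complex.
From Stdlib Require Import ClassicalEpsilon.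
Set Implicit Arguments. Unset Strict Implicit. Unset Printing Implicit Defensive.
Import Order.TTheory GRing.Theory Num.Theory.
Local Open Scope ring_scope.

Section AlgebraSpans.
Variables (R : realType) (A : algType R[i]).
Local Notation C := R[i].

Definition span (T : Type) (g : T -> A) (a : A) : Prop :=
  exists s : seq (C * T), a = \sum_(x <- s) x.1 *: g x.2.

Section Span.
Variables (T : Type) (g : T -> A).

Lemma span0 : span g 0.
Proof. by exists [::]; rewrite big_nil. Qed.

Lemma spanD a b : span g a -> span g b -> span g (a + b).
Proof. by move=> [s ->] [t ->]; exists (s ++ t); rewrite big_cat. Qed.

Lemma spanZ c a : span g a -> span g (c *: a).
Proof.
move=> [s ->]; exists [seq (c * x.1, x.2) | x <- s].
by rewrite big_map scaler_sumr; apply: eq_bigr => x _; rewrite scalerA.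
Qed.

Lemma spanB a b : span g a -> span g b -> span g (a - b).
Proof. by move=> ha hb; apply: spanD => //; rewrite -scaleN1r; apply: spanZ. Qed.

Lemma span_gen t : span g (g t).
Proof. by exists [:: (1, t)]; rewrite big_cons big_nil scale1r addr0. Qed.

Lemma span_sum (I : Type) (r : seq I) (P : pred I) (G : I -> A) :
  (forall i, P i -> span g (G i)) -> span g (\sum_(i <- r | P i) G i).
Proof. by move=> h; apply: (big_ind (span g)); [exact: span0 | exact: spanD | exact: h]. Qed.

End Span.

Definition in_lideal (x : A) (c : C) (a : A) : Prop :=
  exists b, a = b * (x - c%:A).

Section LeftIdeal.
Variables (x : A) (c : C).

Lemma in_lideal0 : in_lideal x c 0.
Proof. by exists 0; rewrite mul0r. Qed.

Lemma in_lidealD a b : in_lideal x c a -> in_lideal x c b -> in_lideal x c (a + b).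
Proof. by move=> [a' ->] [b' ->]; exists (a' + b'); rewrite mulrDl. Qed.

Lemma in_lidealMl r a : in_lideal x c a -> in_lideal x c (r * a).
Proof. by move=> [a' ->]; exists (r * a'); rewrite mulrA. Qed.

Lemma in_lidealB a b : in_lideal x c a -> in_lideal x c b -> in_lideal x c (a - b).
Proof. by move=> ha hb; apply: in_lidealD => //; rewrite -mulN1r; apply: in_lidealMl. Qed.

Lemma in_lideal_sum (I : Type) (r : seq I) (P : pred I) (G : I -> A) :
  (forall i, P i -> in_lideal x c (G i)) -> in_lideal x c (\sum_(i <- r | P i) G i).
Proof.
by move=> h; apply: (big_ind (in_lideal x c)); [exact: in_lideal0 | exact: in_lidealD | exact: h].
Qed.

Lemma in_lideal_horner_alg (p : {poly C}) : root p c -> in_lideal x c (horner_alg x p).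
Proof.
move=> /factor_theorem [q ->]; exists (horner_alg x q).
by rewrite rmorphM rmorphB /= horner_algX horner_algC.
Qed.

End LeftIdeal.

Lemma pevalE (p : {poly C}) (x : A) : peval p x = horner_alg x p.
Proof.
rewrite -[in RHS](coefK p) /peval poly_def linear_sum /=.
apply/eq_bigr => k _.
by rewrite -mul_polyC rmorphM /= horner_algC rmorphXn /= horner_algX mulr_algl.
Qed.

Lemma inRRetaE (c : C) (x a : A) : inRReta c x a <-> in_lideal x c a.
Proof.
split.
- move=> [n [r [q [hq ->]]]]; apply: in_lideal_sum => m _; apply: in_lidealMl.
  by rewrite pevalE; apply: in_lideal_horner_alg; apply/rootP.
- move=> [b ->]; exists 1%N, (fun _ => b), (fun _ => 'X - c%:P); split.
    by move=> m; rewrite !hornerE subrr.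
  by rewrite big_ord1 pevalE rmorphB /= horner_algX horner_algC.
Qed.

Section Words.
Variables (F H : A).

Lemma wordFH_cat s t : wordFH F H (s ++ t) = wordFH F H s * wordFH F H t.
Proof. by rewrite /wordFH big_cat. Qed.

Lemma wordFH_nseq b n : wordFH F H (nseq n b) = (if b then F else H) ^+ n.
Proof.
elim: n => [|n IH]; first by rewrite /wordFH big_nil expr0.
by rewrite /wordFH /= big_cons -/(wordFH F H _) IH exprS.
Qed.

Lemma inRFHE a : inRFH F H a <-> span (wordFH F H) a.
Proof.
split.
  by move=> [n [c [w ->]]]; apply: span_sum => m _; apply: spanZ; apply: span_gen.
move=> [s ->]; exists (size s), (fun m => (nth (0, [::]) s m).1),
  (fun m => (nth (0, [::]) s m).2).
by rewrite (big_nth (0, [::])) big_mkord.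
Qed.

Lemma inRFHM a b : inRFH F H a -> inRFH F H b -> inRFH F H (a * b).
Proof.
move=> /inRFHE [s ->] /inRFHE [t ->]; apply/inRFHE.
rewrite mulr_suml; apply: span_sum => x _; rewrite mulr_sumr; apply: span_sum => y _.
by rewrite -scalerAl -scalerAr -wordFH_cat; do 2 apply: spanZ; apply: span_gen.
Qed.

Definition monoFH (t : nat * nat) : A := F ^+ t.1 * H ^+ t.2.

Hypothesis HF_comm : H * F - F * H = - F.

Lemma mulHF : H * F = F * (H - 1).
Proof. by rewrite -[H * F](subrK (F * H)) HF_comm mulrBr mulr1 addrC. Qed.

Lemma mulHFn n : H * F ^+ n = F ^+ n * (H - n%:R).
Proof.
elim: n => [|n IH]; first by rewrite expr0 mulr1 mul1r subr0.
rewrite exprSr mulrA IH -!mulrA; congr (_ * _).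
by rewrite mulrBl mulHF mulr_natl -mulr_natr -mulrBr -natr1 opprD addrA addrAC.
Qed.

Lemma span_monoFH_wordFH s : span monoFH (wordFH F H s).
Proof.
elim: s => [|b s [s' e]].
  have -> : wordFH F H [::] = monoFH (0, 0)%N by rewrite /wordFH big_nil /monoFH !expr0 mulr1.
  exact: span_gen.
rewrite /wordFH big_cons -/(wordFH F H s) e mulr_sumr.
apply: span_sum => [[c [i j]]] _; rewrite -scalerAr; apply: spanZ => /=.
case: b.
  by rewrite /monoFH mulrA -exprS; apply: (span_gen monoFH (i.+1, j)).
rewrite /monoFH /= mulrA mulHFn -mulrA mulrBl -exprS mulr_natl mulrBr mulrnAr.
rewrite -scaler_nat; apply: spanB; last apply: spanZ.
  exact: (span_gen monoFH (i, j.+1)).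
exact: (span_gen monoFH (i, j)).
Qed.

Lemma inRFH_span_monoFH a : inRFH F H a -> span monoFH a.
Proof.
by move=> /inRFHE [s ->]; apply: span_sum => x _; apply: spanZ; apply: span_monoFH_wordFH.
Qed.

End Words.

End AlgebraSpans.

Section PBW.
Variables (R : realType) (A : algType R[i]) (f : {poly R[i]}) (E F H : A) (lam : R[i]).
Local Notation C := R[i].
Hypothesis Rf : is_Rf f E F H.

Local Notation idx3 := (nat * (nat * nat))%type.

Definition pbw (t : idx3) : A := pbw_mono E F H t.1 t.2.1 t.2.2.

Definition coef3 (s : seq (C * idx3)) (t : idx3) : C := \sum_(x <- s | x.2 == t) x.1.

Definition ord3_val n (t : 'I_n * ('I_n * 'I_n)) : idx3 := (val t.1, (val t.2.1, val t.2.2)).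

Lemma coef3_cons x s t : coef3 (x :: s) t = (if x.2 == t then x.1 else 0) + coef3 s t.
Proof. by rewrite /coef3 big_cons; case: ifP => _ //; rewrite add0r. Qed.

Lemma sum_coef3 n (g : idx3 -> A) s :
    all (fun x => [&& x.2.1 < n, x.2.2.1 < n & x.2.2.2 < n]%N) s ->
  \sum_(x <- s) x.1 *: g x.2 =
  \sum_(t : 'I_n * ('I_n * 'I_n)) coef3 s (ord3_val t) *: g (ord3_val t).
Proof.
elim: s => [_|x s IH /andP [hx hs]].
  by rewrite big_nil; symmetry; apply: big1 => t _; rewrite /coef3 big_nil scale0r.
rewrite big_cons IH //.
under [RHS]eq_bigr do rewrite coef3_cons scalerDl.
rewrite big_split /=; congr (_ + _).
move: hx; case: x => c [a [b d]] /= /and3P [ha hb hd].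
rewrite (bigD1 (Ordinal ha, (Ordinal hb, Ordinal hd))) //= eqxx big1 ?addr0 // => t ht.
case: eqP => [e|_]; last by rewrite scale0r.
case/eqP: ht; move: e; case: t => [i [j k]] /= [ea eb ed].
by congr (_, (_, _)); apply: val_inj.
Qed.

Lemma pbw_relation (g : idx3 -> A) s :
  \sum_(x <- s) x.1 *: pbw x.2 = 0 -> \sum_(x <- s) x.1 *: g x.2 = 0.
Proof.
move=> rel.
set n := (\max_(x <- s) (x.2.1 + x.2.2.1 + x.2.2.2)).+1.
have bnd : all (fun x => [&& x.2.1 < n, x.2.2.1 < n & x.2.2.2 < n]%N) s.
  apply/allP => x xs.
  have := @leq_bigmax_seq _ s predT (fun x => x.2.1 + x.2.2.1 + x.2.2.2)%N x xs isT.
  case: x {xs} => c [i [j k]] /= le; rewrite /n !ltnS.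
  apply/and3P; split; apply: leq_trans le.
  - by rewrite -addnA leq_addr.
  - by rewrite addnAC leq_addl.
  - exact: leq_addl.
have [_ _ _ _ pbw_free] := Rf.
have coef0 (t : 'I_n * ('I_n * 'I_n)) : coef3 s (ord3_val t) = 0.
  case: t => [i [j k]].
  apply: (pbw_free n (fun i j k => coef3 s (i, (j, k)))); rewrite ?ltn_ord //.
  rewrite (sum_coef3 _ bnd) in rel; apply: etrans rel.
  by under eq_bigr => i' _ do rewrite pair_big /=; rewrite pair_big.
by rewrite (sum_coef3 _ bnd); apply: big1 => t _; rewrite coef0 scale0r.
Qed.

Lemma span_pbw a : span pbw a.
Proof.
have [_ _ _ pbw_span _] := Rf; have [n [c ->]] := pbw_span a.
by do 3 (apply: span_sum => ? _); apply: spanZ; apply: (span_gen pbw (_, (_, _))).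
Qed.

(* Substituting [E := lam] on the right of PBW monomials kills [b * (E - lam)]
   and fixes the combinations of the [F^i H^j]. *)
Lemma inRFH_lideal_eq0 w : inRFH F H w -> in_lideal E lam w -> w = 0.
Proof.
have [_ _ HF_comm _ _] := Rf.
move=> /(inRFH_span_monoFH HF_comm) [sw ew] [b eb]; have [sb eb'] := span_pbw b.
pose lift0 x : C * idx3 := (x.1, (x.2.1, (x.2.2, 0%N))).
pose shift y : C * idx3 := (- y.1, (y.2.1, (y.2.2.1, y.2.2.2.+1))).
pose scal y : C * idx3 := (y.1 * lam, y.2).
pose ev (t : idx3) : A := lam ^+ t.2.2 *: monoFH F H (t.1, t.2.1).
have pbw_lift0 : \sum_(x <- map lift0 sw) x.1 *: pbw x.2 = w.
  by rewrite big_map ew; apply: eq_bigr => x _; rewrite /pbw /pbw_mono /= expr0 mulr1.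
have pbw_rest : \sum_(y <- map shift sb ++ map scal sb) y.1 *: pbw y.2 = - w.
  rewrite big_cat !big_map /= eb eb' mulrBr mulr_algr opprB [RHS]addrC.
  rewrite mulr_suml scaler_sumr -sumrN; congr (_ + _); apply: eq_bigr => y _.
    by rewrite scaleNr -scalerAl /pbw /pbw_mono /= exprSr mulrA.
  by rewrite scalerA mulrC.
have ev_rest : \sum_(y <- map shift sb ++ map scal sb) y.1 *: ev y.2 = 0.
  rewrite big_cat !big_map /= -big_split /=; apply: big1 => y _.
  by rewrite /ev !scalerA /= exprS mulrA !mulNr scaleNr addNr.
have := pbw_relation ev (s := map lift0 sw ++ (map shift sb ++ map scal sb)).
rewrite !big_cat /= in pbw_rest ev_rest *; rewrite pbw_lift0 pbw_rest subrr.
rewrite ev_rest addr0 big_map => /(_ erefl) <-; rewrite ew.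
by apply: eq_bigr => x _; rewrite /ev expr0 scale1r.
Qed.

End PBW.

Section EtaProjection.
Variables (R : realType) (A : algType R[i]) (f : {poly R[i]}) (E F H : A) (lam : R[i]).
Hypothesis Rf : is_Rf f E F H.

Local Notation eta := (eta_comp lam E F H).

(* [F^i H^j E^k = lam^k F^i H^j + F^i H^j (E^k - lam^k)], the second term
   lying in the left ideal. *)
Lemma eta_spec_exists a : exists w, eta_spec lam E F H a w.
Proof.
have [_ _ _ pbw_span _] := Rf; have [n [c ->]] := pbw_span a.
exists (\sum_(i < n) \sum_(j < n) \sum_(k < n) (c i j k * lam ^+ k) *: (F ^+ i * H ^+ j)).
split.
  apply/inRFHE; do 3 (apply: span_sum => ? _); apply: spanZ.
  by rewrite -(wordFH_nseq F H true) -(wordFH_nseq F H false) -wordFH_cat; apply: span_gen.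
apply/inRRetaE; rewrite -sumrB; apply: in_lideal_sum => i _.
rewrite -sumrB; apply: in_lideal_sum => j _; rewrite -sumrB; apply: in_lideal_sum => k _.
have [b Ek] : in_lideal E lam (E ^+ k - (lam ^+ k)%:A).
  have := @in_lideal_horner_alg _ _ E lam ('X ^+ k - (lam ^+ k)%:P).
  rewrite rmorphB /= (rmorphXn (horner_alg E)) /= horner_algX horner_algC; apply.
  by rewrite rootE !hornerE subrr.
exists (c i j k *: (F ^+ i * H ^+ j * b)).
by rewrite -scalerAl -(mulrA _ b) -Ek mulrBr mulr_algr scalerBr scalerA.
Qed.

Lemma eta_compP a : eta_spec lam E F H a (eta a).
Proof. by apply: epsilon_spec; apply: eta_spec_exists. Qed.

Lemma eta_comp_unique a w : eta_spec lam E F H a w -> eta a = w.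
Proof.
have [eta_a /inRRetaE a_eta] := eta_compP a; move=> [w_FH /inRRetaE a_w].
apply/subr0_eq; apply: (inRFH_lideal_eq0 (lam := lam) Rf).
  apply/inRFHE; apply: spanB; exact/inRFHE.
have -> : eta a - w = (a - w) - (a - eta a) by rewrite opprB [RHS]addrC addrA subrK.
exact: in_lidealB.
Qed.

Lemma eta_comp_lideal a b : in_lideal E lam (a - b) -> eta a = eta b.
Proof.
move=> ab; apply: eta_comp_unique; have [eta_b /inRRetaE b_eta] := eta_compP b.
split=> //; apply/inRRetaE.
by rewrite -(subrK b a) -addrA; apply: in_lidealD.
Qed.

Lemma eta_compM_central a z : central z -> eta (a * z) = eta a * eta z.
Proof.
move=> zC; apply: eta_comp_unique.
have [eta_a /inRRetaE a_eta] := eta_compP a; have [eta_z /inRRetaE z_eta] := eta_compP z.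
split; first exact: inRFHM.
have -> : a * z - eta a * eta z = z * (a - eta a) + eta a * (z - eta z).
  by rewrite !mulrBr -zC -(zC (eta a)) addrA subrK.
by apply/inRRetaE; apply: in_lidealD; [exact: in_lidealMl a_eta | exact: in_lidealMl z_eta].
Qed.

Lemma eta_compM_eta_central a z : central z -> eta (a * eta z) = eta a * eta z.
Proof.
move=> zC; rewrite -eta_compM_central //; symmetry; apply: eta_comp_lideal.
have [_ /inRRetaE z_eta] := eta_compP z.
by rewrite -mulrBr; apply: in_lidealMl z_eta.
Qed.

End EtaProjection.

Theorem mainTheorem19 (R : realType) (A : algType R[i]) (f : {poly R[i]})
    (E F H : A) (lam : R[i]) :
  is_Rf f E F H -> lam != 0 ->
  forall (p : {poly R[i]}) (u v : A),
    inRFH F H u -> inW lam E F H v ->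
    bullet lam E F H p (u * v) = bullet lam E F H p u * v.
Proof.
move=> Rf _ p u _ _ [z [zC ->]].
by rewrite /bullet mulrA (eta_compM_eta_central lam Rf _ zC) mulrBl -scalerAl.
Qed.
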